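(* Let $M$ be a gasket automaton satisfying the $\gamma$-isolated condition with $\mathcal P_{\alpha\gamma}\cup\mathcal P_{\beta\gamma}\ne\emptyset$, and let $M'$ be a one-step simplification of $M$. Then $M'$ is a gasket automaton satisfying the $\gamma$-isolated condition.
   Context: $\Sigma=\{1,\dots,N\}$. Triangle automaton: $\alpha,\beta,\gamma$ distinct elements of $\Sigma\cup\{-1,-2,-3\}$; states $S_{uv}$ ($u\ne v\in\{\alpha,\beta,\gamma\}$), $Id$, $Exit$; input alphabet $\Sigma^2$; transition $\delta$ with $\delta(Id,(i,j))=Id$ iff $i=j$; $\delta(Id,(i,j))=S_{uv}\Rightarrow\delta(Id,(j,i))=S_{vu}$; $\delta(S_{uv},(i,j))=S_{uv}$ if $(i,j)=(v,u)$, else $Exit$. $\mathcal P_{uv}=\{(i,j):\delta(Id,(i,j))=S_{uv}\}$; a triangle automaton is determined by $\mathcal P_{\alpha\beta},\mathcal P_{\alpha\gamma},\mathcal P_{\beta\gamma}$. $i\triangleleft_{uv}j$ iff $(i,j)\in\mathcal P_{uv}$ (iff $j\triangleleft_{vu}i$); $j$ is $uv$-minimal if no $i\triangleleft_{uv}j$, $uv$-maximal if no $j\triangleleft_{uv}k$, $uv$-isolated if both. Gasket automaton: (Uniqueness) $i\triangleleft_{uv}j,i\triangleleft_{uv}j'\Rightarrow j=j'$; (Gathering) any two of $a\triangleleft_{\alpha\gamma}c$, $a\triangleleft_{\beta\gamma}b$, $b\triangleleft_{\alpha\beta}c$ imply the third; (Boundary) if $\alpha\in\Sigma$ it is $\alpha\gamma$-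 and $\alpha\beta$-minimal; if $\beta\in\Sigma$ it is $\beta\gamma$- and $\beta\alpha$-minimal; if $\gamma\in\Sigma$ it is $\gamma\alpha$- and $\gamma\beta$-minimal. $\gamma$-isolated condition: $\alpha,\beta,\gamma\in\Sigma$; $(\Sigma,\mathcal P_{\alpha\gamma}\cup\mathcal P_{\beta\gamma})$ has no directed cycle; $\gamma$ is $\alpha\gamma$-, $\beta\gamma$- and $\alpha\beta$-isolated. One-step simplification: $b$ is double-maximal if $\alpha\gamma$- and $\beta\gamma$-maximal. Choose $(\tau,\kappa)\in\mathcal P_{\alpha\gamma}\cup\mathcal P_{\beta\gamma}$ with $\kappa$ double-maximal. If $(\tau,\kappa)\in\mathcal P_{\alpha\gamma}$: if $\kappa$ has no $\alpha\beta$-predecessor, $\mathcal P'_{\alpha\beta}=\mathcal P_{\alpha\beta}$, $\mathcal P'_{\alpha\gamma}=\mathcal P_{\alpha\gamma}\setminus\{(\tau,\kappa)\}$, $\mathcal P'_{\beta\gamma}=\mathcal P_{\beta\gamma}$; if $\lambda\triangleleft_{\alpha\beta}\kappa$, then $\mathcal P'_{\alpha\beta}=\mathcal P_{\alpha\beta}$, $\mathcal P'_{\alpha\gamma}=\mathcal P_{\alpha\gamma}\setminus\{(\tau,\kappa)\}$, $\mathcal P'_{\beta\gamma}=\mathcal P_{\beta\gamma}\setminus\{(\tau,\lambda)\}$. If $(\tau,\kappa)\in\mathcal P_{\beta\gamma}$, the same with the roles of $\alpha$ and $\beta$ interchanged. $M'$ is the triangle automaton determined by $\mathcal P'_{\alpha\beta},\mathcal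 P'_{\alpha\gamma},\mathcal P'_{\beta\gamma}$. *)

From mathcomp Require Import all_boot.
Set Implicit Arguments. Unset Strict Implicit. Unset Printing Implicit Defensive.

(* The alphabet Sigma = {1,...,N} is represented by 'I_N (relabelled 0..N-1).
   The label set Sigma ∪ {-1,-2,-3} is 'I_N + 'I_3 (inr k stands for -(k+1)). *)
Definition label (N : nat) := ('I_N + 'I_3)%type.

(* The three corners alpha, beta, gamma (abstract names; their actual labels
   in Sigma ∪ {-1,-2,-3} are passed separately). *)
Inductive corner := Ca | Cb | Cc.

(* A triangle automaton is determined by P_ab, P_ag, P_bg. *)
Record TA (N : nat) := MkTA {
  Pab : {set 'I_N * 'I_N};
  Pag : {set 'I_N * 'I_N};
  Pbg : {set 'I_N * 'I_N} }.

Definition prec N (M : TA N) (u v : corner) (i j : 'I_N) : bool :=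
  match u, v with
  | Ca, Cb => (i, j) \in Pab M
  | Cb, Ca => (j, i) \in Pab M
  | Ca, Cc => (i, j) \in Pag M
  | Cc, Ca => (j, i) \in Pag M
  | Cb, Cc => (i, j) \in Pbg M
  | Cc, Cb => (j, i) \in Pbg M
  | _, _ => false
  end.

(* The triple comes from a genuine transition function delta:
   delta(Id,(i,i)) = Id, so no P_uv contains a diagonal pair, and delta is a
   function, so the six sets P_uv are pairwise disjoint. *)
Definition triangle_wf N (M : TA N) : Prop :=
  (forall u v i, ~ prec M u v i i) /\
  (forall u v u' v' i j, prec M u v i j -> prec M u' v' i j -> u = u' /\ v = v').

Definition uv_minimal N (M : TA N) u v (j : 'I_N) := forall i, ~ prec M u v i j.
Definition uv_maximal N (M : TA N) u v (j : 'I_N) := forall k, ~ prec M u v j k.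
Definition uv_isolated N (M : TA N) u v (j : 'I_N) :=
  uv_minimal M u v j /\ uv_maximal M u v j.

Definition gasket N (M : TA N) (al be ga : label N) : Prop :=
  triangle_wf M /\
  (forall u v i j j', prec M u v i j -> prec M u v i j' -> j = j') /\
  (forall a b c,
     (prec M Ca Cc a c -> prec M Cb Cc a b -> prec M Ca Cb b c) /\
     (prec M Ca Cc a c -> prec M Ca Cb b c -> prec M Cb Cc a b) /\
     (prec M Cb Cc a b -> prec M Ca Cb b c -> prec M Ca Cc a c)) /\
  (forall a, al = inl a -> uv_minimal M Ca Cc a /\ uv_minimal M Ca Cb a) /\
  (forall b, be = inl b -> uv_minimal M Cb Cc b /\ uv_minimal M Cb Ca b) /\
  (forall g, ga = inl g -> uv_minimal M Cc Ca g /\ uv_minimal M Cc Cb g).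

Definition no_directed_cycle N (e : rel 'I_N) : Prop :=
  ~ exists (x : 'I_N) (p : seq 'I_N), p != [::] /\ path e x p /\ last x p = x.

Definition gamma_isolated N (M : TA N) (al be ga : label N) : Prop :=
  exists a b g : 'I_N,
    al = inl a /\ be = inl b /\ ga = inl g /\
    no_directed_cycle (fun i j => ((i, j) \in Pag M) || ((i, j) \in Pbg M)) /\
    uv_isolated M Ca Cc g /\ uv_isolated M Cb Cc g /\ uv_isolated M Ca Cb g.

Definition double_maximal N (M : TA N) (b : 'I_N) :=
  uv_maximal M Ca Cc b /\ uv_maximal M Cb Cc b.

Definition one_step_simplification N (M M' : TA N) : Prop :=
  exists tau kappa : 'I_N,
    double_maximal M kappa /\
    ( ((tau, kappa) \in Pag M /\
       ( ((forall l, ~ prec M Ca Cb l kappa) /\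
          M' = MkTA (Pab M) (Pag M :\ (tau, kappa)) (Pbg M))
       \/ (exists l, prec M Ca Cb l kappa /\
          M' = MkTA (Pab M) (Pag M :\ (tau, kappa)) (Pbg M :\ (tau, l)))))
    \/
      ((tau, kappa) \in Pbg M /\
       ( ((forall l, ~ prec M Cb Ca l kappa) /\
          M' = MkTA (Pab M) (Pag M) (Pbg M :\ (tau, kappa)))
       \/ (exists l, prec M Cb Ca l kappa /\
          M' = MkTA (Pab M) (Pag M :\ (tau, l)) (Pbg M :\ (tau, kappa)))))).

(* Every condition defining a gasket automaton with the gamma-isolated
   property, except Gathering, only forbids certain pairs, so it survives the
   removal of pairs.  Gathering survives because the two pairs removed by a
   simplification step are coherent: by Uniqueness, a gathering triple
   (a, b, c) uses the removed alpha-gamma pair exactly when it uses the removed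
   beta-gamma pair; when only one pair is removed, no gathering triple uses it
   at all. *)
From mathcomp Require Import all_boot.
Set Implicit Arguments. Unset Strict Implicit. Unset Printing Implicit Defensive.

Definition subTA N (M' M : TA N) :=
  [/\ Pab M' \subset Pab M, Pag M' \subset Pag M & Pbg M' \subset Pbg M].

Definition uniqueness N (M : TA N) :=
  forall u v i j j', prec M u v i j -> prec M u v i j' -> j = j'.

Definition gathering N (M : TA N) := forall a b c,
  (prec M Ca Cc a c -> prec M Cb Cc a b -> prec M Ca Cb b c) /\
  (prec M Ca Cc a c -> prec M Ca Cb b c -> prec M Cb Cc a b) /\
  (prec M Cb Cc a b -> prec M Ca Cb b c -> prec M Ca Cc a c).

Definition pruning N (M' M : TA N) :=
  [/\ Pab M' = Pab M, Pag M' \subset Pag M, Pbg M' \subset Pbg M &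
      forall a b c, (a, c) \in Pag M -> (a, b) \in Pbg M -> (b, c) \in Pab M ->
        ((a, c) \in Pag M') = ((a, b) \in Pbg M')].

Section Monotonicity.

Variables (N : nat) (M' M : TA N).
Hypothesis subM : subTA M' M.

Lemma prec_subTA u v i j : prec M' u v i j -> prec M u v i j.
Proof.
case: subM => /subsetP sab /subsetP sag /subsetP sbg.
by case: u; case: v => //= h; by [apply: sab | apply: sag | apply: sbg].
Qed.

Lemma triangle_wf_subTA : triangle_wf M -> triangle_wf M'.
Proof.
move=> [irr disj]; split=> [u v i /prec_subTA | u v u' v' i j].
  exact: irr.
by move=> /prec_subTA h /prec_subTA h'; apply: disj h h'.
Qed.

Lemma uniqueness_subTA : uniqueness M -> uniqueness M'.
Proof. by move=> uniq u v i j j' /prec_subTA h /prec_subTA h'; apply: uniq h h'. Qed.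

Lemma uv_minimal_subTA u v j : uv_minimal M u v j -> uv_minimal M' u v j.
Proof. by move=> minj i /prec_subTA; apply: minj. Qed.

Lemma uv_isolated_subTA u v j : uv_isolated M u v j -> uv_isolated M' u v j.
Proof.
by move=> [minj maxj]; split=> [|k /prec_subTA]; [apply: uv_minimal_subTA | apply: maxj].
Qed.

Lemma gasket_subTA al be ga :
  gasket M al be ga -> gathering M' -> gasket M' al be ga.
Proof.
move=> [wf [uniq [_ [bda [bdb bdg]]]]] gath'.
have minimal2 u v u' v' x :
    uv_minimal M u v x /\ uv_minimal M u' v' x ->
    uv_minimal M' u v x /\ uv_minimal M' u' v' x.
  by case=> m m'; split; apply: uv_minimal_subTA.
split; first exact: triangle_wf_subTA.
split; first exact: uniqueness_subTA.
split; first exact: gath'.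
by split; [move=> x /bda | split=> x; [move/bdb | move/bdg]]; apply: minimal2.
Qed.

End Monotonicity.

Lemma no_directed_cycle_subrel N (e' e : rel 'I_N) :
  subrel e' e -> no_directed_cycle e -> no_directed_cycle e'.
Proof.
move=> see' acyc [x [p [p_nil [xp px]]]]; apply: acyc.
by exists x, p; split=> //; split=> //; apply: sub_path xp.
Qed.

Lemma gamma_isolated_subTA N (M' M : TA N) al be ga :
  subTA M' M -> gamma_isolated M al be ga -> gamma_isolated M' al be ga.
Proof.
move=> subM [a [b [g [ea [eb [eg [acyc [iag [ibg iab]]]]]]]]].
case: (subM) => _ /subsetP sag /subsetP sbg.
exists a, b, g; do 3 (split; first by []).
split.
  apply: no_directed_cycle_subrel acyc => x y /orP [xy | xy]; apply/orP.
    by left; apply: sag.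
  by right; apply: sbg.
by split; [|split]; apply: uv_isolated_subTA subM _ _ _ _.
Qed.

Lemma pruning_subTA N (M' M : TA N) : pruning M' M -> subTA M' M.
Proof. by case=> eab sag sbg _; split; rewrite ?eab. Qed.

Lemma gathering_pruning N (M' M : TA N) :
  gathering M -> pruning M' M -> gathering M'.
Proof.
move=> gath [eab /subsetP sag /subsetP sbg coh] a b c /=; rewrite eab.
have /= [gab [gbg gag]] := gath a b c.
split=> [/sag ac /sbg ab | ]; first exact: gab.
split=> [ac' bc | ab' bc].
  have ac := sag _ ac'.
  by rewrite -(coh a b c ac (gbg ac bc) bc).
have ab := sbg _ ab'.
by rewrite (coh a b c (gag ab bc) ab bc).
Qed.

Section SimplificationPruning.

Variables (N : nat) (M : TA N) (tau : 'I_N).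

Lemma pruning_setD1_pair b0 c0 : uniqueness M -> (b0, c0) \in Pab M ->
  pruning (MkTA (Pab M) (Pag M :\ (tau, c0)) (Pbg M :\ (tau, b0))) M.
Proof.
move=> uniq b0c0; split; rewrite /= ?subsetDl // => a b c ac ab bc.
rewrite !in_setD1 ac ab !andbT !xpair_eqE.
suff -> : (c == c0) = (b == b0) by [].
apply/eqP/eqP => [ec | eb].
  by rewrite ec in bc; apply: (uniq Cb Ca c0).
by rewrite eb in bc; apply: (uniq Ca Cb b0).
Qed.

Lemma pruning_setD1_ag c0 : uv_minimal M Ca Cb c0 ->
  pruning (MkTA (Pab M) (Pag M :\ (tau, c0)) (Pbg M)) M.
Proof.
move=> minc0; split; rewrite /= ?subsetDl // => a b c ac ab bc.
rewrite in_setD1 ac ab andbT xpair_eqE.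
by case: (c =P c0) bc => [-> /minc0 | _ _]; rewrite ?andbF.
Qed.

Lemma pruning_setD1_bg b0 : uv_maximal M Ca Cb b0 ->
  pruning (MkTA (Pab M) (Pag M) (Pbg M :\ (tau, b0))) M.
Proof.
move=> maxb0; split; rewrite /= ?subsetDl // => a b c ac ab bc.
rewrite in_setD1 ac ab andbT xpair_eqE.
by case: (b =P b0) bc => [-> /maxb0 | _ _]; rewrite ?andbF.
Qed.

End SimplificationPruning.

Lemma one_step_simplification_pruning N (M M' : TA N) :
  uniqueness M -> one_step_simplification M M' -> pruning M' M.
Proof.
move=> uniq [tau [kappa [_ [[_ [[minK ->] | [l [lK ->]]]] | [_ [[maxK ->] | [l [Kl ->]]]]]]]].
- exact: pruning_setD1_ag.
- exact: pruning_setD1_pair.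
- exact: pruning_setD1_bg.
- exact: pruning_setD1_pair.
Qed.

Theorem lemma5p3 (N : nat) (al be ga : label N) (M M' : TA N) :
  al != be -> al != ga -> be != ga ->
  gasket M al be ga ->
  gamma_isolated M al be ga ->
  Pag M :|: Pbg M != set0 ->
  one_step_simplification M M' ->
  gasket M' al be ga /\ gamma_isolated M' al be ga.
Proof.
move=> _ _ _ gasM isoM _ simp.
have [_ [uniq [gath _]]] := gasM.
have prune := one_step_simplification_pruning uniq simp.
have subM := pruning_subTA prune.
split; last exact: gamma_isolated_subTA isoM.
exact: (gasket_subTA subM gasM (gathering_pruning gath prune)).
Qed.
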